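(* In the two-stage mining game, suppose miners are homogeneous in their initial costs, $\tilde c_1=\dots=\tilde c_N$, and $\gamma>0$. Fix all parameters except $\eta$ and consider $\eta$ large enough that $A(\beta^* )=A(0)=\{1,\dots,n\}$. Then, as $\eta\to\infty$, $$\Pi^*(\beta^* )=\Pi^*(0)+b\,H^*(0)\,\bar I+O(\bar I^2),\qquad b:=\frac1n\Big(1-\frac{c_0^{(n)}+\gamma H^*(0)}{c_0^{(n)}+2\gamma H^*(0)}\Big)>0,$$ and $b\to0$ as $\gamma\to0$. Here $O(\bar I^2)$ denotes a remainder bounded in absolute value by $C\bar I^2$ for some constant $C$ and all sufficiently large $\eta$.
   Context: Two-stage mining game: $N\ge2$ miners with initial costs-per-hash $\tilde c_i>0$; newest hardware cost $\tilde c_0\le\min_i\tilde c_i$; parameters $\eta\ge0$, $R>0$, $\gamma\ge0$, $K>0$. Stage 1: miner $i$ picks $\beta_i\in[0,1]$, giving cost $c_i(\beta_i)=\tilde c_i-\beta_i(\tilde c_i-\tilde c_0)+\frac{\eta(\tilde c_i-\tilde c_0)}{2}\beta_i^2$. Stage 2: given $\beta$, miners pick $h_i\ge0$, $H=\sum_jh_j$, payoff $\pi_i=\frac{h_i}{H}R-c_i(\beta_i)h_i-\frac{\gamma}{2}h_i^2-K\mathbf 1_{\{i\notin A(0),\beta_i>0\}}$ if $H>0$, else $0$; $h^*(\beta)$ is the unique stage-2 pure Nash equilibrium, $H^*(\beta)=\sum_jh_j^*(\beta)$, $A(\beta)=\{i:h_i^*(\beta)>0\}$, $\pi_i^*(\beta)$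 is miner $i$'s payoff at $(\beta,h^*(\beta))$, and $\Pi^*(\beta)=\sum_{i=1}^n\pi_i^*(\beta)$ is the aggregate profit. The equilibrium investment is $\beta_i^*=\min\{1/\eta,1\}$ for active miners and $0$ otherwise. Notation: $c_0^{(n)}=\sum_{i=1}^n\tilde c_i$; $I_i:=c_i(0)-c_i(\beta_i^* )$, equal to $(\tilde c_i-\tilde c_0)/(2\eta)$ for $\eta>1$; $\bar I=\sum_{i=1}^nI_i$. *)

From mathcomp Require Import all_boot all_order all_algebra.
Set Implicit Arguments. Unset Strict Implicit. Unset Printing Implicit Defensive.
Import Order.TTheory GRing.Theory Num.Theory.
Local Open Scope ring_scope.

Section Mining.
Variables (R : realFieldType) (N : nat).

Definition mcost (ct c0 eta beta : R) : R :=
  ct - beta * (ct - c0) + eta * (ct - c0) / 2 * beta ^+ 2.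

Definition Htot (h : 'I_N -> R) : R := \sum_(j < N) h j.

(* stage-2 payoff of miner i, given per-miner costs c, the indicator
   charged i = (i \notin A(0)) && (beta_i > 0) of the fixed cost K,
   and a hash-rate profile h *)
Definition payoff (Rw gamma K : R) (c : 'I_N -> R) (charged : 'I_N -> bool)
  (h : 'I_N -> R) (i : 'I_N) : R :=
  if 0 < Htot h then
    h i / Htot h * Rw - c i * h i - gamma / 2 * h i ^+ 2
    - (if charged i then K else 0)
  else 0.

Definition upd (h : 'I_N -> R) (i : 'I_N) (x : R) : 'I_N -> R :=
  fun j => if j == i then x else h j.

Definition stage2_NE (Rw gamma K : R) (c : 'I_N -> R) (charged : 'I_N -> bool)
  (h : 'I_N -> R) : Prop :=
  (forall i, 0 <= h i) /\
  (forall i x, 0 <= x ->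
     payoff Rw gamma K c charged (upd h i x) i <= payoff Rw gamma K c charged h i).

Definition costvec (ct : 'I_N -> R) (c0 eta : R) (beta : 'I_N -> R) : 'I_N -> R :=
  fun i => mcost (ct i) c0 eta (beta i).

Definition charged_of (h0 : 'I_N -> R) (beta : 'I_N -> R) : 'I_N -> bool :=
  fun i => ~~ (0 < h0 i) && (0 < beta i).

Definition aggprofit (Rw gamma K : R) (ct : 'I_N -> R) (c0 eta : R)
  (h0 : 'I_N -> R) (beta : 'I_N -> R) (h : 'I_N -> R) : R :=
  \sum_(i < N) payoff Rw gamma K (costvec ct c0 eta beta) (charged_of h0 beta) h i.

End Mining.

(* beta* = min{1/eta, 1} (the value taken by active miners) *)
Definition betastar_val (R : realFieldType) (eta : R) : R :=
  if eta <= 1 then 1 else eta^-1.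

Definition beta0 (R : realFieldType) (N : nat) : 'I_N -> R := fun _ => 0.

Definition Ibar (R : realFieldType) (N : nat) (ct : 'I_N -> R) (c0 eta : R) : R :=
  \sum_(i < N) (mcost (ct i) c0 eta 0 - mcost (ct i) c0 eta (betastar_val eta)).

Definition bcoef (R : realFieldType) (N : nat) (ct : 'I_N -> R) (gamma H0 : R) : R :=
  let c0n := \sum_(i < N) ct i in
  (N%:R)^-1 * (1 - (c0n + gamma * H0) / (c0n + 2 * gamma * H0)).

(* With identical costs, the first-order conditions of an interior stage-2
   equilibrium force it to be symmetric, h_i = a with (c + gamma a) a = R (n-1)/n^2,
   and the aggregate profit is R - n (c a + gamma a^2 / 2).  Investing beta* = 1/eta
   lowers every cost by I = (c - c0)/(2 eta); the equilibrium moves to a + d with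
   d (c + gamma (2a + d)) = I (a + d), hence 0 <= d <= I/gamma.  Per miner, the
   profit change minus gamma a^2 I/(c + 2 gamma a) (which sums to b H*(0) Ibar) is,
   after eliminating I, gamma d^2 times a factor in [0, 3/2], i.e. O(I^2).  Finally
   every equilibrium has c H*(0) <= n R, so b <= gamma R/(n c^2) vanishes with gamma. *)

From mathcomp Require Import all_boot all_order all_algebra lra ring.
Import Order.TTheory GRing.Theory Num.Theory.
Local Open Scope ring_scope.

Set Implicit Arguments.
Unset Strict Implicit.

Section InteriorMaximum.
Variable R : realFieldType.

Lemma eq0_of_norm_le_small (p B d : R) : 0 < d ->
  (forall s, 0 < s -> s <= d -> `|p| <= s * B) -> p = 0.
Proof.
move=> d_gt0 small; apply/normr0_eq0/eqP; rewrite eq_le normr_ge0 andbT.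
have B_ge0 : 0 <= B by rewrite -(pmulr_rge0 _ d_gt0) (le_trans _ (small d _ _)).
apply/ler_addgt0Pr => e e_gt0; rewrite add0r.
have dB_ge0 : 0 <= d * B by rewrite mulr_ge0 // ltW.
pose s := d * e / (e + d * B).
have s_gt0 : 0 < s by rewrite divr_gt0 ?mulr_gt0 //; lra.
apply: le_trans (small s s_gt0 _) _.
  by rewrite ler_pdivrMr ?ler_pM2l //; lra.
rewrite /s mulrAC ler_pdivrMr; last lra.
have -> : e * (e + d * B) = e * e + d * e * B by ring.
have := mulr_gt0 e_gt0 e_gt0; lra.
Qed.

Lemma cubic_local_max_stationary (p q r d : R) : 0 < d ->
  (forall t, `|t| <= d -> t * (p + t * (q + t * r)) <= 0) -> p = 0.
Proof.
move=> d_gt0 loc; apply: (@eq0_of_norm_le_small p (`|q| + d * `|r|) d d_gt0).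
move=> s s_gt0 le_sd.
have bound t : `|t| <= d -> `|q + t * r| <= `|q| + d * `|r|.
  move=> le_td; rewrite (le_trans (ler_normD _ _)) // lerD2l normrM.
  by rewrite ler_wpM2r.
have /bound : `|- s| <= d by rewrite normrN gtr0_norm.
have /bound : `|s| <= d by rewrite gtr0_norm.
rewrite !ler_norml => /andP[lo_s hi_s] /andP[lo_ns hi_ns].
have := loc (- s); have := loc s; rewrite normrN gtr0_norm // => /(_ le_sd).
rewrite pmulr_rle0 // => at_s /(_ le_sd).
rewrite mulNr oppr_le0 pmulr_rge0 // => at_ns.
apply/andP; split; nra.
Qed.

Lemma share_profit_stationary (Rw c g S h : R) : 0 <= S -> 0 < h ->
  (forall x, 0 < x -> x / (S + x) * Rw - c * x - g / 2 * x ^+ 2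
                      <= h / (S + h) * Rw - c * h - g / 2 * h ^+ 2) ->
  Rw * S = (c + g * h) * (S + h) ^+ 2.
Proof.
move=> S_ge0 h_gt0 hmax; apply/eqP; rewrite -subr_eq0; apply/eqP.
set H := S + h; have H_gt0 : 0 < H by rewrite /H; lra.
apply: (@cubic_local_max_stationary _ (- (c + g * h) * H - g / 2 * H ^+ 2)
          (- (g / 2 * H)) (h / 2)); first by lra.
move=> t; rewrite ler_norml => /andP[t_ge t_le].
have Ht_gt0 : 0 < H + t by rewrite /H; lra.
move: (hmax (h + t) ltac:(lra)); rewrite -[_ <= h / _ * _ - _ - _]subr_le0.
have -> : (h + t) / (S + (h + t)) * Rw - c * (h + t) - g / 2 * (h + t) ^+ 2
          - (h / (S + h) * Rw - c * h - g / 2 * h ^+ 2)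
        = t * (Rw * S - (c + g * h) * H ^+ 2
               + t * (- (c + g * h) * H - g / 2 * H ^+ 2 + t * - (g / 2 * H)))
          / (H * (H + t)).
  rewrite /H; field; rewrite /H in Ht_gt0.
  by apply/andP; split; apply/eqP; lra.
by rewrite ler_pdivrMr ?mul0r ?mulr_gt0.
Qed.

End InteriorMaximum.

Section Stage2Equilibrium.
Variables (R : realFieldType) (N : nat) (Rw g K : R).
Variables (c : 'I_N -> R) (ch : 'I_N -> bool).
Implicit Types (h : 'I_N -> R) (i j : 'I_N).

Lemma Htot_upd h i (x : R) : Htot (upd h i x) = Htot h - h i + x.
Proof.
rewrite /Htot (bigD1 i) //= [in RHS](bigD1 i) //= /upd eqxx.
rewrite (eq_bigr h) => [|j /negbTE ->] //; ring.
Qed.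

Lemma Htot_sub_ge0 h i : (forall j, 0 <= h j) -> 0 <= Htot h - h i.
Proof.
move=> h_ge0; rewrite -[_ - _]addr0 -(Htot_upd h i 0).
by apply: sumr_ge0 => j _; rewrite /upd; case: ifP.
Qed.

Lemma payoffE h i : ch i = false -> 0 < Htot h ->
  payoff Rw g K c ch h i = h i / Htot h * Rw - c i * h i - g / 2 * h i ^+ 2.
Proof. by move=> chi H_gt0; rewrite /payoff H_gt0 chi subr0. Qed.

Lemma payoff_upd h i x : ch i = false -> 0 < Htot h - h i + x ->
  payoff Rw g K c ch (upd h i x) i
  = x / (Htot h - h i + x) * Rw - c i * x - g / 2 * x ^+ 2.
Proof. by move=> chi H_gt0; rewrite payoffE ?Htot_upd // /upd eqxx. Qed.

Lemma payoff_upd0 h i : ch i = false -> payoff Rw g K c ch (upd h i 0) i = 0.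
Proof.
move=> chi; rewrite /payoff chi /upd eqxx; case: ifP => // _.
by rewrite !mul0r mulr0 expr0n mulr0 !subr0.
Qed.

Lemma stage2_NE_foc h i : stage2_NE Rw g K c ch h -> ch i = false -> 0 < h i ->
  Rw * (Htot h - h i) = (c i + g * h i) * Htot h ^+ 2.
Proof.
move=> [h_ge0 NE] chi hi_gt0; have S_ge0 := Htot_sub_ge0 i h_ge0.
rewrite -{2}(subrK (h i) (Htot h)); apply: share_profit_stationary => // x x_gt0.
rewrite -(@payoff_upd h i x) //; last by lra.
rewrite subrK -payoffE //; last by lra.
exact: NE _ _ (ltW x_gt0).
Qed.

Lemma stage2_NE_cost_le h i : 0 <= Rw -> 0 <= g ->
  stage2_NE Rw g K c ch h -> ch i = false -> c i * h i <= Rw.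
Proof.
move=> Rw_ge0 g_ge0 [h_ge0 NE] chi.
have := NE i 0 (lexx 0); rewrite payoff_upd0 // => payoff_ge0.
have S_ge0 := Htot_sub_ge0 i h_ge0; have hi_ge0 := h_ge0 i.
have [H_gt0 | H_le0] := ltP 0 (Htot h); last first.
  have -> : h i = 0 by lra.
  by rewrite mulr0.
move: payoff_ge0; rewrite payoffE //.
have : h i / Htot h * Rw <= Rw.
  by rewrite ler_piMl // ler_pdivrMr // mul1r; lra.
have := mulr_ge0 (mulr_ge0 g_ge0 hi_ge0) hi_ge0.
rewrite -mulrA -expr2; nra.
Qed.

Lemma Htot_const h a : (forall j, h j = a) -> Htot h = N%:R * a.
Proof.
by move=> ha; rewrite /Htot (eq_bigr _ (fun j _ => ha j)) sumr_const card_ord mulr_natl.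
Qed.

Section UniformCost.
Variable c1 : R.
Hypothesis c_uniform : forall i, c i = c1.
Hypothesis uncharged : forall i, ch i = false.

Lemma stage2_NE_symmetric h : 0 < Rw -> 0 <= g -> (forall j, 0 < h j) ->
  stage2_NE Rw g K c ch h -> forall i j, h i = h j.
Proof.
move=> Rw_gt0 g_ge0 h_gt0 NE i j.
have := stage2_NE_foc NE (uncharged i) (h_gt0 i).
have := stage2_NE_foc NE (uncharged j) (h_gt0 j).
rewrite !c_uniform => foc_j foc_i.
have pos : 0 < Rw + g * Htot h ^+ 2 by have := sqr_ge0 (Htot h); nra.
have : (h i - h j) * (Rw + g * Htot h ^+ 2)
       = (Rw * (Htot h - h j) - (c1 + g * h j) * Htot h ^+ 2)
         - (Rw * (Htot h - h i) - (c1 + g * h i) * Htot h ^+ 2) by ring.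
rewrite foc_i foc_j !subrr => /eqP; rewrite mulf_eq0 (gt_eqF pos) orbF subr_eq0.
exact: eqP.
Qed.

Lemma stage2_NE_symmetric_level h i : 0 < Rw -> 0 <= g -> (forall j, 0 < h j) ->
  stage2_NE Rw g K c ch h -> (c1 + g * h i) * h i = Rw * (N%:R - 1) / N%:R ^+ 2.
Proof.
move=> Rw_gt0 g_ge0 h_gt0 NE.
have foc := stage2_NE_foc NE (uncharged i) (h_gt0 i).
rewrite c_uniform (Htot_const (stage2_NE_symmetric Rw_gt0 g_ge0 h_gt0 NE ^~ i)) in foc.
have N_gt0 : 0 < N%:R :> R by rewrite ltr0n (leq_ltn_trans (leq0n i)).
have hi_gt0 := h_gt0 i.
have -> : Rw * (N%:R - 1) / N%:R ^+ 2 = Rw * (N%:R * h i - h i) / (N%:R ^+ 2 * h i).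
  by field; apply/andP; split; apply/eqP; lra.
by rewrite foc; field; lra.
Qed.

Lemma sum_payoff_symmetric h a : (0 < N)%N -> 0 < a -> (forall j, h j = a) ->
  \sum_(i < N) payoff Rw g K c ch h i = Rw - N%:R * (c1 * a + g / 2 * a ^+ 2).
Proof.
move=> N_gt0 a_gt0 ha; have Nr_gt0 : 0 < N%:R :> R by rewrite ltr0n.
have H_gt0 : 0 < Htot h by rewrite (Htot_const ha) mulr_gt0.
rewrite (eq_bigr (fun _ => a / (N%:R * a) * Rw - c1 * a - g / 2 * a ^+ 2)).
  by rewrite sumr_const card_ord -mulr_natl; field; apply/andP; split; apply/eqP; lra.
by move=> i _; rewrite payoffE // c_uniform ha (Htot_const ha).
Qed.

Lemma stage2_NE_Htot_le h : 0 <= Rw -> 0 <= g ->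
  stage2_NE Rw g K c ch h -> c1 * Htot h <= N%:R * Rw.
Proof.
move=> Rw_ge0 g_ge0 NE; rewrite /Htot mulr_sumr.
apply: le_trans (_ : _ <= \sum_(i < N) Rw) _.
  by apply: ler_sum => i _; rewrite -(c_uniform i) stage2_NE_cost_le.
by rewrite sumr_const card_ord mulr_natl.
Qed.

End UniformCost.
End Stage2Equilibrium.

Lemma equilibrium_shift_bounds (R : realFieldType) (c g I a d : R) :
  0 < c -> 0 < g -> 0 <= I -> 0 < a -> 0 < a + d ->
  (c + g * a) * a = (c - I + g * (a + d)) * (a + d) ->
  d * (c + g * (2 * a + d)) = I * (a + d) /\ 0 <= d /\ g * d <= I.
Proof.
move=> c_gt0 g_gt0 I_ge0 a_gt0 ad_gt0 level.
have shift : d * (c + g * (2 * a + d)) = I * (a + d).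
  have -> : d * (c + g * (2 * a + d))
            = (c - I + g * (a + d)) * (a + d) - (c + g * a) * a + I * (a + d) by ring.
  by rewrite level subrr add0r.
have shift_split : d * (c + g * (2 * a + d)) = g * d * (a + d) + d * (c + g * a) by ring.
have ca_gt0 : 0 < c + g * a by rewrite addr_gt0 ?mulr_gt0.
have d_ge0 : 0 <= d.
  have pos : 0 < c + g * (2 * a + d).
    have -> : c + g * (2 * a + d) = c + g * a + g * (a + d) by ring.
    by rewrite addr_gt0 ?mulr_gt0.
  by rewrite -(pmulr_lge0 _ pos) shift mulr_ge0 // ltW.
split=> //; split=> //.
by rewrite -(ler_pM2r ad_gt0) -shift shift_split lerDl mulr_ge0 // ltW.
Qed.

Lemma per_miner_gain_expansion (R : realFieldType) (c g I a e : R) :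
  0 < c -> 0 < g -> 0 <= I -> 0 < a -> 0 < e ->
  (c + g * a) * a = (c - I + g * e) * e ->
  `|(c * a + g / 2 * a ^+ 2) - ((c - I) * e + g / 2 * e ^+ 2)
    - g * a ^+ 2 / (c + 2 * g * a) * I| <= 3 / (2 * g) * I ^+ 2.
Proof.
move=> c_gt0 g_gt0 I_ge0 a_gt0.
have [d ->] : exists d, e = a + d by exists (e - a); ring.
move=> ad_gt0 /(equilibrium_shift_bounds c_gt0 g_gt0 I_ge0 a_gt0 ad_gt0).
move=> [shift [d_ge0 gd_le]].
have den_gt0 : 0 < c + 2 * g * a by rewrite addr_gt0 // !mulr_gt0.
set m := g * a ^+ 2 / (c + 2 * g * a).
have m_ge0 : 0 <= m by rewrite divr_ge0 ?mulr_ge0 // ltW.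
have m_le : m <= a / 2.
  rewrite ler_pdivrMr //.
  have -> : a / 2 * (c + 2 * g * a) = g * a ^+ 2 + a * c / 2 by field.
  by rewrite lerDl divr_ge0 // mulr_ge0 // ltW.
set k := ((3 * a + d) / 2 - m) / (a + d).
have k_ge0 : 0 <= k by rewrite divr_ge0 //; lra.
have k_le : k <= 3 / 2 by rewrite ler_pdivrMr //; lra.
(* Eliminating [I] leaves a multiple of [d^2]: the first-order terms cancel. *)
have -> : (c * a + g / 2 * a ^+ 2) - ((c - I) * (a + d) + g / 2 * (a + d) ^+ 2) - m * I
          = g * d ^+ 2 * k.
  have -> : I = d * (c + g * (2 * a + d)) / (a + d) by rewrite shift mulfK // gt_eqF.
  rewrite /k /m; field.
  by repeat (apply/andP; split); apply/eqP; nra.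
have gd2_ge0 : 0 <= g * d ^+ 2 by rewrite mulr_ge0 ?exprn_ge0 // ltW.
rewrite ger0_norm; last exact: mulr_ge0.
apply: (le_trans (ler_wpM2l gd2_ge0 k_le)).
have -> : g * d ^+ 2 * (3 / 2) = 3 / (2 * g) * (g * d) ^+ 2.
  by field; rewrite gt_eqF.
apply: ler_wpM2l; first by rewrite divr_ge0 // mulr_ge0 // ltW.
by rewrite !expr2 ler_pM // mulr_ge0 // ltW.
Qed.

Lemma charged_of_beta0 (R : realFieldType) (N : nat) (h : 'I_N -> R) i :
  charged_of h (@beta0 R N) i = false.
Proof. by rewrite /charged_of /beta0 ltxx andbF. Qed.

Lemma charged_of_active (R : realFieldType) (N : nat) (h beta : 'I_N -> R) i :
  0 < h i -> charged_of h beta i = false.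
Proof. by rewrite /charged_of => ->. Qed.

Lemma betastar_valE (R : realFieldType) (eta : R) : 1 < eta -> betastar_val eta = eta^-1.
Proof. by rewrite /betastar_val leNgt => ->. Qed.

Lemma mcost_betastar (R : realFieldType) (ct c0 eta : R) : 1 < eta ->
  mcost ct c0 eta (betastar_val eta) = ct - (ct - c0) / (2 * eta).
Proof.
by move=> eta_gt1; rewrite betastar_valE // /mcost; field; rewrite gt_eqF //; lra.
Qed.

Section Homogeneous.
Variables (R : realFieldType) (N : nat) (ct : 'I_N -> R) (c c0 Rw K : R).
Hypothesis N_gt0 : (0 < N)%N.
Hypothesis ct_uniform : forall i, ct i = c.
Hypothesis c_gt0 : 0 < c.
Hypothesis c0_le : c0 <= c.
Hypothesis Rw_gt0 : 0 < Rw.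

Let Nr_gt0 : 0 < N%:R :> R. Proof. by rewrite ltr0n. Qed.

Lemma costvec_beta0 eta i : costvec ct c0 eta (@beta0 R N) i = c.
Proof. by rewrite /costvec /mcost /beta0 ct_uniform; ring. Qed.

Lemma costvec_betastar eta i : 1 < eta ->
  costvec ct c0 eta (fun=> betastar_val eta) i = c - (c - c0) / (2 * eta).
Proof. by move=> eta_gt1; rewrite /costvec mcost_betastar // ct_uniform. Qed.

Lemma Ibar_homogeneous eta : 1 < eta -> Ibar ct c0 eta = N%:R * ((c - c0) / (2 * eta)).
Proof.
move=> eta_gt1; rewrite /Ibar (eq_bigr (fun _ => (c - c0) / (2 * eta))).
  by rewrite sumr_const card_ord [RHS]mulr_natl.
by move=> i _; rewrite mcost_betastar // /mcost ct_uniform; ring.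
Qed.

Lemma bcoef_homogeneous g H : 0 <= g -> 0 <= H ->
  bcoef ct g H = g * H / (N%:R * (N%:R * c + 2 * g * H)).
Proof.
move=> g_ge0 H_ge0.
rewrite /bcoef (eq_bigr (fun _ => c)) // sumr_const card_ord -(mulr_natl c N).
have : 0 <= 2 * g * H by rewrite !mulr_ge0.
have := mulr_gt0 Nr_gt0 c_gt0 => ? ?.
by field; apply/andP; split; rewrite gt_eqF //; lra.
Qed.

Lemma bcoef_gt0 g H : 0 < g -> 0 < H -> 0 < bcoef ct g H.
Proof.
move=> g_gt0 H_gt0; rewrite (bcoef_homogeneous (ltW g_gt0) (ltW H_gt0)).
by rewrite divr_gt0 ?mulr_gt0 ?addr_gt0 ?mulr_gt0.
Qed.

Lemma aggprofit_gain_expansion g (h0 h1 : 'I_N -> R) eta : 0 < g -> 1 < eta ->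
  (forall i, 0 < h0 i) -> (forall i, 0 < h1 i) ->
  stage2_NE Rw g K (costvec ct c0 0 (@beta0 R N)) (charged_of h0 (@beta0 R N)) h0 ->
  stage2_NE Rw g K (costvec ct c0 eta (fun=> betastar_val eta))
    (charged_of h0 (fun=> betastar_val eta)) h1 ->
  `| aggprofit Rw g K ct c0 eta h0 (fun=> betastar_val eta) h1
     - aggprofit Rw g K ct c0 eta h0 (@beta0 R N) h0
     - bcoef ct g (Htot h0) * Htot h0 * Ibar ct c0 eta |
  <= 3 / (2 * g * N%:R) * Ibar ct c0 eta ^+ 2.
Proof.
move=> g_gt0 eta_gt1 h0_gt0 h1_gt0 NE0 NE1.
pose i0 := Ordinal N_gt0; set I := (c - c0) / (2 * eta).
have I_ge0 : 0 <= I by rewrite divr_ge0 ?subr_ge0 // mulr_ge0 //; lra.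
have cv0 := costvec_beta0 0; have ch0 := @charged_of_beta0 R N h0.
have cv1 i := costvec_betastar i eta_gt1.
have ch1 i := @charged_of_active R N h0 (fun=> betastar_val eta) i (h0_gt0 i).
have sym0 := stage2_NE_symmetric cv0 ch0 Rw_gt0 (ltW g_gt0) h0_gt0 NE0 ^~ i0.
have sym1 := stage2_NE_symmetric cv1 ch1 Rw_gt0 (ltW g_gt0) h1_gt0 NE1 ^~ i0.
have level0 := stage2_NE_symmetric_level cv0 ch0 i0 Rw_gt0 (ltW g_gt0) h0_gt0 NE0.
have level1 := stage2_NE_symmetric_level cv1 ch1 i0 Rw_gt0 (ltW g_gt0) h1_gt0 NE1.
rewrite /aggprofit (sum_payoff_symmetric _ _ _ cv1 ch1 N_gt0 (h1_gt0 i0) sym1).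
rewrite (sum_payoff_symmetric _ _ _ (costvec_beta0 eta) ch0 N_gt0 (h0_gt0 i0) sym0).
rewrite (Htot_const sym0) Ibar_homogeneous // -/I (bcoef_homogeneous (ltW g_gt0)); last first.
  by rewrite mulr_ge0 // ltW.
have := per_miner_gain_expansion c_gt0 g_gt0 I_ge0 (h0_gt0 i0) (h1_gt0 i0).
rewrite level0 level1 => /(_ erefl).
set a := h0 i0; set e := h1 i0; move=> per_miner.
have a_gt0 : 0 < a := h0_gt0 i0.
have den_gt0 : 0 < c + 2 * g * a by rewrite addr_gt0 // !mulr_gt0.
have -> : Rw - N%:R * ((c - I) * e + g / 2 * e ^+ 2) - (Rw - N%:R * (c * a + g / 2 * a ^+ 2))
          - g * (N%:R * a) / (N%:R * (N%:R * c + 2 * g * (N%:R * a))) * (N%:R * a) * (N%:R * I)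
        = N%:R * ((c * a + g / 2 * a ^+ 2) - ((c - I) * e + g / 2 * e ^+ 2)
                  - g * a ^+ 2 / (c + 2 * g * a) * I).
  have -> : N%:R * c + 2 * g * (N%:R * a) = N%:R * (c + 2 * g * a) by ring.
  by field; rewrite !gt_eqF // mulr_gt0.
have -> : 3 / (2 * g * N%:R) * (N%:R * I) ^+ 2 = N%:R * (3 / (2 * g) * I ^+ 2).
  by field; rewrite !gt_eqF.
by rewrite normrM gtr0_norm //; apply: ler_wpM2l per_miner; exact: ltW.
Qed.

Lemma bcoef_equilibrium_bound g (h : 'I_N -> R) : 0 < g ->
  stage2_NE Rw g K (costvec ct c0 0 (@beta0 R N)) (charged_of h (@beta0 R N)) h ->
  0 <= bcoef ct g (Htot h) <= g * Rw / (N%:R * c ^+ 2).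
Proof.
move=> g_gt0 NE; have H_ge0 : 0 <= Htot h by apply: sumr_ge0 => i _; case: NE.
have cH_le := stage2_NE_Htot_le (costvec_beta0 0) (@charged_of_beta0 R N h)
                (ltW Rw_gt0) (ltW g_gt0) NE.
have H_le : Htot h <= N%:R * Rw / c by rewrite ler_pdivlMr // mulrC.
have den_gt0 : 0 < N%:R * (N%:R * c + 2 * g * Htot h).
  by rewrite mulr_gt0 // ltr_wpDr ?mulr_ge0 ?mulr_gt0 // ltW.
rewrite (bcoef_homogeneous (ltW g_gt0) H_ge0); apply/andP; split.
  exact: divr_ge0 (mulr_ge0 (ltW g_gt0) H_ge0) (ltW den_gt0).
rewrite ler_pdivrMr //.
have -> : g * Rw / (N%:R * c ^+ 2) * (N%:R * (N%:R * c + 2 * g * Htot h))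
          = g * (N%:R * Rw / c) + 2 * g ^+ 2 * Rw * Htot h / c ^+ 2.
  by field; rewrite !gt_eqF.
have := ler_wpM2l (ltW g_gt0) H_le.
have : 0 <= 2 * g ^+ 2 * Rw * Htot h / c ^+ 2.
  by rewrite divr_ge0 ?sqr_ge0 // !mulr_ge0 ?sqr_ge0 // ltW.
lra.
Qed.

End Homogeneous.

Unset Implicit Arguments.

Theorem proposition5p5 (R : realFieldType) (N : nat) (ct : 'I_N -> R)
  (c0 Rw K : R) :
  (2 <= N)%N ->
  (forall i, 0 < ct i) ->
  (forall i, c0 <= ct i) ->
  (forall i j, ct i = ct j) ->            (* homogeneous initial costs *)
  0 < Rw -> 0 < K ->
  (* (1) fixed gamma > 0, expansion as eta -> oo *)
  (forall (gamma : R) (h0 : 'I_N -> R) (hstar : R -> 'I_N -> R),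
     0 < gamma ->
     (* h0 = h*(0): the stage-2 equilibrium at beta = 0
        (c(0) = ct does not depend on eta) *)
     stage2_NE Rw gamma K (costvec ct c0 0 (@beta0 R N))
               (charged_of h0 (@beta0 R N)) h0 ->
     (* for eta large enough, hstar eta = h^*(betastar) with A(betastar) = A(0) = all *)
     (exists eta1, forall eta, eta1 <= eta ->
        (forall i, 0 < h0 i) /\ (forall i, 0 < hstar eta i) /\
        stage2_NE Rw gamma K
          (costvec ct c0 eta (fun _ => betastar_val eta))
          (charged_of h0 (fun _ => betastar_val eta)) (hstar eta)) ->
     (let H0 := Htot h0 in
     let b := bcoef ct gamma H0 in
     0 < b /\
     exists C : R, exists eta0 : R, forall eta, eta0 <= eta ->
       `| aggprofit Rw gamma K ct c0 eta h0 (fun _ => betastar_val eta) (hstar eta)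
          - aggprofit Rw gamma K ct c0 eta h0 (@beta0 R N) h0
          - b * H0 * Ibar ct c0 eta |
       <= C * (Ibar ct c0 eta) ^+ 2))
  /\
  (* (2) b -> 0 as gamma -> 0+, where H0 = H*(0) depends on gamma *)
  (forall (h0g : R -> 'I_N -> R),
     (forall gamma, 0 < gamma ->
        stage2_NE Rw gamma K (costvec ct c0 0 (@beta0 R N))
                  (charged_of (h0g gamma) (@beta0 R N)) (h0g gamma)) ->
     forall eps : R, 0 < eps -> exists delta : R, 0 < delta /\
       forall gamma, 0 < gamma -> gamma < delta ->
         `| bcoef ct gamma (Htot (h0g gamma)) | < eps).
Proof.
move=> N_ge2 ct_gt0 c0_le_ct ct_hom Rw_gt0 _.
have N_gt0 : (0 < N)%N by apply: leq_trans N_ge2.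
pose i0 := Ordinal N_gt0; set c := ct i0.
have ct_uniform i : ct i = c := ct_hom i i0.
have c_gt0 := ct_gt0 i0; have c0_le := c0_le_ct i0.
split=> [g h0 hstar g_gt0 NE0 [eta1 large] H0 b | h0g NE eps eps_gt0].
  have [h0_gt0 _] := large eta1 (lexx _).
  split.
    apply: (bcoef_gt0 N_gt0 ct_uniform c_gt0 g_gt0).
    have := Htot_sub_ge0 i0 (fun i => ltW (h0_gt0 i)).
    by have := h0_gt0 i0; rewrite /H0; lra.
  exists (3 / (2 * g * N%:R)), (Num.max eta1 2) => eta.
  rewrite ge_max => /andP[/large[_ [h1_gt0 NE1]] eta_ge2].
  by apply: (aggprofit_gain_expansion N_gt0 ct_uniform c_gt0 c0_le Rw_gt0 g_gt0) => //; lra.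
exists (eps * (N%:R * c ^+ 2) / Rw); split.
  by rewrite !divr_gt0 ?mulr_gt0 ?exprn_gt0 ?ltr0n.
move=> g g_gt0; rewrite ltr_pdivlMr // => g_lt.
have [b_ge0 b_le] := andP (bcoef_equilibrium_bound N_gt0 ct_uniform c_gt0 Rw_gt0 g_gt0 (NE g g_gt0)).
rewrite ger0_norm //; apply: le_lt_trans b_le _.
by rewrite ltr_pdivrMr ?mulr_gt0 ?exprn_gt0 ?ltr0n // mulrAC.
Qed.
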